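(* Let $(\Omega,\mathcal{F})$ be a measurable space, $T:\Omega\to\Omega$ measurable, and $V$ a $T$-invariant upper probability. The following are equivalent: (i) $V$ is ergodic; (ii) there exists $Q\in\operatorname{core}(V)\cap\mathcal{M}^e(T)$ such that for every $P\in\operatorname{core}(V)$, $\lim_{n\to\infty}\frac{1}{n}\sum_{i=0}^{n-1}P(B\cap T^{-i}C)=P(B)Q(C)$ for all $B,C\in\mathcal{F}$; (iii) there exists $Q\in\operatorname{core}(V)\cap\mathcal{M}(T)$ such that for every $P\in\operatorname{core}(V)$, $\lim_{n\to\infty}\frac{1}{n}\sum_{i=0}^{n-1}P(B\cap T^{-i}C)=P(B)Q(C)$ for all $B,C\in\mathcal{F}$.
   Context: A capacity is a monotone map $\mu:\mathcal{F}\to[0,1]$ with $\mu(\emptyset)=0,\mu(\Omega)=1$. An upper probability is a capacity $V$ with $V(A)=\max_{P\in\Lambda}P(A)$ for a weak* (setwise convergence) compact set $\Lambda$ of probabilities; $\operatorname{core}(V)$ is the set of finitely additive normalized $P\le V$ (these are probabilities). $V$ is $T$-invariant if $V(T^{-1}A)=V(A)$; $\mathcal{I}=\{A:T^{-1}A=A\}$; $V$ is ergodic if for each $B\in\mathcal{I}$, $V(B)\in\{0,1\}$ and ($V(B)=0$ or $V(B^c)=0$). $\mathcal{M}(T)$: $T$-invariant probabilities; $\mathcal{M}^e(T)$: those with $P(\mathcal{I})\subset\{0,1\}$. *)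

From HB Require Import structures.
From mathcomp Require Import all_boot all_order all_algebra.
From mathcomp Require Import all_classical all_reals.
From mathcomp Require Import topology normedtype sequences measure.
Set Implicit Arguments. Unset Strict Implicit. Unset Printing Implicit Defensive.
Import Order.TTheory GRing.Theory Num.Theory numFieldNormedType.Exports.
Local Open Scope classical_set_scope.
Local Open Scope ring_scope.

Section Defs.
Context {d : measure_display} {X : measurableType d} {R : realType}.

(* Real-valued set functions on X; only their values on measurable sets matter. *)

Definition capacity (mu : set X -> R) : Prop :=
  [/\ mu set0 = 0, mu setT = 1,
      (forall A, measurable A -> 0 <= mu A <= 1) &
      (forall A B, measurable A -> measurable B -> A `<=` B -> mu A <= mu B)].

Definition fin_add_prob (P : set X -> R) : Prop :=
  [/\ P setT = 1,
      (forall A, measurable A -> 0 <= P A) &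
      (forall A B, measurable A -> measurable B -> A `&` B = set0 ->
         P (A `|` B) = P A + P B)].

Definition is_prob (P : set X -> R) : Prop :=
  [/\ P set0 = 0, P setT = 1,
      (forall A, measurable A -> 0 <= P A) &
      (forall F : nat -> set X, (forall n, measurable (F n)) ->
         trivIset setT F -> measurable (\bigcup_n F n) ->
         (fun n => \sum_(i < n) P (F i)) @ \oo --> P (\bigcup_n F n))].

(** measurable sets, and the setwise-convergence (weak-star) topology:
    the topology of pointwise convergence on measurable sets *)
Definition msets := {A : set X | measurable A}.

Definition setwise_eval (P : set X -> R) : {ptws msets -> R} :=
  fun A => P (proj1_sig A).

Definition setwise_compact (L : set (set X -> R)) : Prop :=
  compact (setwise_eval @` L).

Definition upper_probability (V : set X -> R) : Prop :=
  capacity V /\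
  exists L : set (set X -> R),
    [/\ L `<=` is_prob, setwise_compact L &
        forall A, measurable A ->
          (exists2 P, L P & P A = V A) /\ (forall P, L P -> P A <= V A)].

Definition core (V : set X -> R) : set (set X -> R) :=
  [set P | fin_add_prob P /\ forall A, measurable A -> P A <= V A].

Definition invariant_fun (T : X -> X) (mu : set X -> R) : Prop :=
  forall A, measurable A -> mu (T @^-1` A) = mu A.

Definition invariant_sets (T : X -> X) : set (set X) :=
  [set A | measurable A /\ T @^-1` A = A].

Definition ergodic_cap (T : X -> X) (V : set X -> R) : Prop :=
  forall B, invariant_sets T B ->
    (V B = 0 \/ V B = 1) /\ (V B = 0 \/ V (~` B) = 0).

Definition MT (T : X -> X) : set (set X -> R) :=
  [set P | is_prob P /\ invariant_fun T P].

Definition MeT (T : X -> X) : set (set X -> R) :=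
  [set P | MT T P /\ forall B, invariant_sets T B -> P B = 0 \/ P B = 1].

Definition avg_limit (T : X -> X) (P Q : set X -> R) : Prop :=
  forall B C, measurable B -> measurable C ->
    (fun n : nat => n%:R^-1 * \sum_(i < n) P (B `&` (iter i T) @^-1` C))
      @ \oo --> P B * Q C.

End Defs.

From HB Require Import structures.
From mathcomp Require Import all_boot all_order all_algebra.
From mathcomp Require Import all_classical all_reals.
From mathcomp Require Import topology normedtype sequences measure.
From mathcomp Require Import lra.
Set Implicit Arguments. Unset Strict Implicit. Unset Printing Implicit Defensive.
Import Order.TTheory GRing.Theory Num.Theory numFieldNormedType.Exports.
Local Open Scope classical_set_scope.
Local Open Scope ring_scope.

(* Every element of core(V) is countably additive, because V is continuous at
   the empty set: otherwise a cluster point of maximising probabilities in the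
   compact set defining V would charge a decreasing sequence of sets with empty
   intersection.  The Cesaro averages n^-1 sum_(i < n) P (B `&` T^-i A) lie in
   the compact cube [0, 1]^F of the pointwise topology, and their cluster points
   are finitely additive and T-invariant.  If Q is T-invariant and ergodic, a
   Hahn-decomposition argument (a maximiser of a signed set function, made
   invariant by a liminf of preimages) shows that every invariant finitely
   additive mu with 0 <= mu <= Q equals mu(Omega) Q.  When V is ergodic this
   makes the invariant element Q of core(V) unique and identifies every cluster
   point of the averages, which therefore converge to P(B) Q(C).  Conversely,
   for an invariant set B the averages are constant, so P(B) = P(B) Q(B) and
   P(B^c) Q(B) = 0 for every P in core(V), which forces V(B) = 0 or
   V(B^c) = 0. *)

Lemma cvgr_unique {R : numFieldType} {I} {F : set_system I} {FF : ProperFilter F}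
  (f : I -> R) (a b : R) : f @ F --> a -> f @ F --> b -> a = b.
Proof. exact: norm_cvg_unique. Qed.

Lemma nonincreasing_setS {X : Type} (A : nat -> set X) :
  (forall n, A n.+1 `<=` A n) -> forall m n, (m <= n)%N -> A n `<=` A m.
Proof.
move=> h m n /subnK <-; elim: (n - m)%N => [|k ih] //=.
by rewrite addSn; apply: subset_trans ih.
Qed.

Section FinitelyAdditive.
Context {d : measure_display} {X : measurableType d} {R : realType}.
Implicit Types (f P : set X -> R) (A B : set X).

Definition fin_additive f := forall A B, measurable A -> measurable B ->
  A `&` B = set0 -> f (A `|` B) = f A + f B.

Lemma fin_additive0 f : fin_additive f -> f set0 = 0.
Proof.
move=> fa; have := fa set0 set0 measurable0 measurable0 (setI0 _).
rewrite setU0; lra.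
Qed.

Lemma fin_additiveD f A B : fin_additive f -> measurable A -> measurable B ->
  B `<=` A -> f (A `\` B) = f A - f B.
Proof.
move=> fa mA mB BA; rewrite -{2}(setDKU BA) fa ?addrK //; first exact: measurableD.
by rewrite setIC setDIK.
Qed.

Lemma fin_additiveUI f A B : fin_additive f -> measurable A -> measurable B ->
  f (A `|` B) + f (A `&` B) = f A + f B.
Proof.
move=> fa mA mB; have mAB : measurable (A `&` B) by exact: measurableI.
have -> : A `|` B = A `|` (B `\` (A `&` B)).
  by apply/seteqP; split=> x /=; case: (pselect (A x)); tauto.
rewrite fa ?fin_additiveD //; first lra.
- exact: measurableD.
- by apply/seteqP; split=> x //= [? [? []]].
Qed.

Lemma fin_add_prob_additive P : fin_add_prob P -> fin_additive P.
Proof. by case. Qed.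

Lemma fin_add_prob_ge0 P A : fin_add_prob P -> measurable A -> 0 <= P A.
Proof. by case=> _ + _; apply. Qed.

Lemma fin_add_prob_le P A B : fin_add_prob P -> measurable A -> measurable B ->
  A `<=` B -> P A <= P B.
Proof.
move=> hP mA mB AB; rewrite -subr_ge0 -fin_additiveD //.
  exact/fin_add_prob_ge0/measurableD.
exact: fin_add_prob_additive.
Qed.

Lemma fin_add_prob_le1 P A : fin_add_prob P -> measurable A -> P A <= 1.
Proof. by move=> hP mA; case: (hP) => <- _ _; apply: fin_add_prob_le. Qed.

Lemma fin_add_probC P A : fin_add_prob P -> measurable A -> P (~` A) = 1 - P A.
Proof.
move=> hP mA; rewrite -setTD fin_additiveD //; first by case: hP => ->.
exact: fin_add_prob_additive.
Qed.

End FinitelyAdditive.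

Section ContinuityAtEmpty.
Context {d : measure_display} {X : measurableType d} {R : realType}.
Implicit Types (f P : set X -> R).

Definition continuous_at_empty f := forall A : nat -> set X,
  (forall n, measurable (A n)) -> (forall n, A n.+1 `<=` A n) ->
  \bigcap_n A n = set0 -> f (A n) @[n --> \oo] --> 0.

Lemma is_prob_fin_add_prob P : is_prob P -> fin_add_prob P.
Proof.
case=> P0 P1 Pge0 Pca; split => // A B mA mB AB.
pose F n := if n is 0 then A else if n is 1 then B else set0.
have mF n : measurable (F n) by case: n => [|[|n]] //; exact: measurable0.
have tF : trivIset setT F.
  move=> [|[|i]] [|[|j]] _ _ //= [x] //=; try by case.
  - by move=> h; have : (A `&` B) x by []; rewrite AB.
  - by move=> [h1 h2]; have : (A `&` B) x by []; rewrite AB.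
have UF : \bigcup_n F n = A `|` B.
  apply/seteqP; split => x /=; first by move=> [[|[|n]]] //= _ h; [left|right].
  by case=> h; [exists 0%N|exists 1%N].
have mAB : measurable (A `|` B) by exact: measurableU.
have := Pca F mF tF; rewrite UF => /(_ mAB) /cvgr_unique; apply.
apply: cvg_near_cst; exists 2%N => // n /= n2.
by rewrite -(subnK n2) addn2 !big_ord_recl /= big1 ?addr0.
Qed.

Lemma is_prob_continuous_at_empty P : is_prob P -> continuous_at_empty P.
Proof.
move=> hP A mA dA IA; have fP := is_prob_fin_add_prob hP; case: hP => _ _ _ Pca.
pose F i := A i `\` A i.+1.
have mF i : measurable (F i) by exact: measurableD.
have tF : trivIset setT F.
  move=> i j _ _ [x [[Aix nAi1x] [Ajx nAj1x]]].
  by apply: contrapT => /eqP; rewrite neq_ltn => /orP[] lt;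
    [apply: nAi1x; apply: (nonincreasing_setS dA lt)
    |apply: nAj1x; apply: (nonincreasing_setS dA lt)].
have UF : \bigcup_n F n = A 0%N.
  apply/seteqP; split => x /=.
    by move=> [i _ [Aix _]]; apply: (nonincreasing_setS dA (leq0n i)).
  move=> A0x; have [m nAm] : exists m, ~ A m x.
    apply: contrapT => /forallNP h; rewrite -[False]/(set0 x) -IA => n _.
    exact: contrapT.
  elim: m nAm => [//|m ih] nAm.
  by case: (pselect (A m x)) => [Amx|/ih//]; exists m.
have sF n : \sum_(i < n) P (F i) = P (A 0%N) - P (A n).
  elim: n => [|n ih]; first by rewrite big_ord0 subrr.
  rewrite big_ord_recr /= ih /F fin_additiveD //; [lra|exact: fin_add_prob_additive].
have := Pca F mF tF; rewrite UF => /(_ (mA 0%N)); rewrite (eq_cvg _ _ sF) => h.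
have -> : (fun n => P (A n)) = (fun n => P (A 0%N) - (P (A 0%N) - P (A n))).
  by apply: funext => n; lra.
by rewrite -(subrr (P (A 0%N))); apply: cvgB => //; exact: cvg_cst.
Qed.

Lemma continuous_at_empty_is_prob P :
  fin_add_prob P -> continuous_at_empty P -> is_prob P.
Proof.
move=> fP cP; have fa := fin_add_prob_additive fP.
split; [exact: fin_additive0|by case: fP|by move=> A; apply: fin_add_prob_ge0|].
move=> F mF tF mU; set U := \bigcup_n F n.
pose S n := \bigcup_(i in [set k | (k < n)%N]) F i.
have mS n : measurable (S n) by apply: bigcup_measurable.
have SS n : S n.+1 = S n `|` F n.
  apply/seteqP; split => x /=.
  - move=> [i /=]; rewrite ltnS leq_eqVlt => /orP[/eqP -> | lt] Fx; first by right.
    by left; exists i.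
  - case=> [[i /= lt Fx]|Fx]; first by exists i => //=; apply: ltnW.
    by exists n => /=.
have sF n : \sum_(i < n) P (F i) = P (S n).
  elim: n => [|n ih].
    by rewrite big_ord0 -(fin_additive0 fa); congr P; apply/seteqP; split => x [].
  rewrite big_ord_recr /= ih SS fa //.
  apply/seteqP; split => x //= [[i /= lt Fix] Fnx].
  have /= ein := tF i n I I (ex_intro _ x (conj Fix Fnx)).
  by move: lt; rewrite ein ltnn.
rewrite (eq_cvg _ _ sF).
pose D n := U `\` S n.
have SU n : S n `<=` U by move=> x [i _ Fix]; exists i.
have -> : (fun n => P (S n)) = (fun n => P U - P (D n)).
  by apply: funext => n; rewrite fin_additiveD //; lra.
suff : (fun n => P U - P (D n)) @ \oo --> P U - 0 by rewrite subr0.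
apply: cvgB; first exact: cvg_cst.
apply: cP => [n|n x [Ux nSx]|]; first exact: measurableD.
  by split => // Sx; apply: nSx; rewrite SS; left.
apply/seteqP; split => x //= h; have [[i _ Fix] _] := h 0%N I.
by have [_] := h i.+1 I; apply; rewrite SS; right.
Qed.

Lemma continuous_at_empty_le f P : fin_add_prob f ->
  (forall A, measurable A -> f A <= P A) ->
  continuous_at_empty P -> continuous_at_empty f.
Proof.
move=> ff fP cP A mA dA IA; apply: (squeeze_cvgr _ (cvg_cst 0) (cP A mA dA IA)).
by apply: nearW => n; rewrite fin_add_prob_ge0 ?fP.
Qed.

End ContinuityAtEmpty.

Lemma subseq_cvgn (phi : nat -> nat) : (forall k, (k <= phi k)%N) -> phi @ \oo --> \oo.
Proof. by move=> hphi; apply/cvgnyPge => N; exists N => // k /= /leq_trans; apply. Qed.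

Section ClusterBounds.
Context {I : Type} {T : topologicalType} {R : realFieldType}.
Variables (F : set_system I) (f : I -> T) (p : T).
Hypothesis fp : cluster (f @ F) p.

Lemma cluster_closed (S : set T) :
  closed S -> (\forall i \near F, S (f i)) -> S p.
Proof.
move=> cS FS; have := fp; rewrite clusterE => /(_ _ FS).
by rewrite -(closure_id S).1.
Qed.

Lemma cluster_le (u : T -> R) c : continuous u ->
  (\forall i \near F, u (f i) <= c) -> u p <= c.
Proof.
by move=> cu; apply: (cluster_closed (S := u @^-1` [set x | x <= c]));
  apply: preimage_closed => //; exact: closed_le.
Qed.

Lemma cluster_ge (u : T -> R) c : continuous u ->
  (\forall i \near F, c <= u (f i)) -> c <= u p.
Proof.
by move=> cu; apply: (cluster_closed (S := u @^-1` [set x | c <= x]));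
  apply: preimage_closed => //; exact: closed_ge.
Qed.

Context {FF : Filter F}.

Lemma cluster_le_cvg (u : T -> R) (c : I -> R) l : continuous u ->
  (\forall i \near F, u (f i) <= c i) -> c @ F --> l -> u p <= l.
Proof.
move=> cu uc /cvgrPdist_le cl; apply/ler_addgt0Pr => e e0.
apply: (cluster_le cu); apply: filterS2 uc (cl e e0) => i uci.
by rewrite ler_distlC => /andP[_]; apply: le_trans.
Qed.

Lemma cluster_cvg (u : T -> R) c : continuous u -> u \o f @ F --> c -> u p = c.
Proof.
move=> cu /cvgrPdist_le uc; apply/eqP; rewrite eq_sym -subr_eq0 -normr_le0.
apply/ler_addgt0Pr => e e0; rewrite add0r.
apply: (cluster_le (u := fun x => `|c - u x|)); last exact: uc.
move=> x; apply: (@continuous_comp _ _ _ (fun x => c - u x) Num.norm).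
  by have := cvgB (cvg_cst c) (cu x); exact.
exact: norm_continuous.
Qed.

End ClusterBounds.

(* [tychonoff] needs the coordinates [msets] to form an eqType. *)
HB.instance Definition _ d (X : measurableType d) := gen_eqMixin (@msets d X).

Section UnitCube.
Context {d : measure_display} {X : measurableType d} {R : realType}.
Local Notation M := (@msets d X).
Local Notation FS := {ptws M -> R}.

Definition unit_cube : set FS := [set h | forall A, `[0, 1]%classic (h A)].

Lemma unit_cube_cluster (f : nat -> FS) : (forall n, unit_cube (f n)) ->
  exists2 g, unit_cube g & cluster (f @ \oo) g.
Proof.
move=> hf; have cube_compact : compact unit_cube.
  exact: (tychonoff (fun _ => @segment_compact R 0 1)).
have /(cube_compact _ (fmap_proper_filter f _)) [g [g01 fg]] : (f @ \oo) unit_cube.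
  by exists 0%N => // n _; exact: hf.
by exists g.
Qed.

Lemma eval_mset_continuous (A : M) : continuous (fun h : FS => h A).
Proof. exact: proj_continuous. Qed.

Lemma cvg_eval_of_clusters (f : nat -> FS) (A : M) (l : R) :
  (forall n, unit_cube (f n)) ->
  (forall g, unit_cube g -> cluster (f @ \oo) g -> g A = l) ->
  (fun n => f n A) @ \oo --> l.
Proof.
move=> hf hl; apply/cvgrPdist_lt => e e0; apply: contrapT => not_near.
have far N : exists n, (N <= n)%N /\ e <= `|l - f n A|.
  apply: contrapT => /forallNP far; apply: not_near; exists N => // n /= Nn.
  by rewrite ltNge; apply/negP => le; apply: (far n).
have [phi hphi] := choice far.
have [g g01 fg] := unit_cube_cluster (fun k => hf (phi k)).
have : e <= `|l - g A|.
  apply: (cluster_ge fg (u := fun h : FS => `|l - h A|)); last first.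
    by apply: nearW => k; exact: (hphi k).2.
  move=> h; apply: (@continuous_comp _ _ _ (fun h : FS => l - h A) Num.norm).
    have := cvgB (cvg_cst l) (@eval_mset_continuous A h); exact.
  exact: norm_continuous.
have fg' : cluster (f @ \oo) g.
  apply: cvg_cluster fg => S; apply: subseq_cvgn => k; exact: (hphi k).1.
by rewrite (hl g g01 fg') subrr normr0 leNgt e0.
Qed.

Definition of_msets (g : FS) : set X -> R :=
  fun A => if pselect (measurable A) is left mA then g (exist _ A mA) else 0.

Lemma of_msetsE (g : FS) A (mA : measurable A) : of_msets g A = g (exist _ A mA).
Proof.
by rewrite /of_msets; case: pselect => [mA'|//]; rewrite (Prop_irrelevance mA' mA).
Qed.

Lemma of_msets_sval (g : FS) (A : M) : of_msets g (sval A) = g A.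
Proof. by case: A => A mA; exact: of_msetsE. Qed.

End UnitCube.

Section UpperProbability.
Context {d : measure_display} {X : measurableType d} {R : realType}.
Variable V : set X -> R.
Implicit Types (P : set X -> R) (A : set X).

Lemma core_ergodic (T : X -> X) P : ergodic_cap T V -> core V P ->
  forall E, invariant_sets T E -> P E = 0 \/ P E = 1.
Proof.
move=> eV [fP PV] E iE; have [mE _] := iE.
have mC : measurable (~` E) by exact: measurableC.
have [_ [VE|VC]] := eV E iE; [left|right].
  by apply/eqP; rewrite eq_le fin_add_prob_ge0 // andbT -VE PV.
have : P (~` E) <= 0 by rewrite -VC PV.
by rewrite fin_add_probC //; have := fin_add_prob_le1 fP mE; lra.
Qed.

Hypothesis uV : upper_probability V.

Lemma upper_probability_attained A : measurable A ->
  exists2 P, core V P & P A = V A.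
Proof.
case: uV => _ [L [Lprob _ LV]] mA; have [[P LP PA] _] := LV A mA.
exists P => //; split; first exact/is_prob_fin_add_prob/Lprob.
by move=> B mB; have [_] := LV B mB; apply.
Qed.

Lemma upper_probability_continuous_at_empty : continuous_at_empty V.
Proof.
case: uV => -[_ _ V01 Vmono] [L [Lprob cL LV]] A mA dA IA.
have VA_le n m : (n <= m)%N -> V (A m) <= V (A n).
  by move=> nm; apply: Vmono => //; exact: nonincreasing_setS.
suff small e : 0 < e -> exists N, V (A N) < e.
  apply/cvgrPdist_lt => e /small[N VN]; exists N => // n /= Nn.
  have /andP[VA0 _] := V01 _ (mA n).
  by rewrite sub0r normrN ger0_norm //; exact: le_lt_trans (VA_le _ _ Nn) VN.
move=> e0; apply: contrapT => /forallNP large.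
have /choice [Pn hPn] N : exists P, L P /\ P (A N) = V (A N).
  by have [[P LP PA] _] := LV _ (mA N); exists P.
(* A cluster point [P] of the maximisers [Pn N] gives every [A j] mass [>= e]. *)
pose f N := setwise_eval (Pn N).
have /(cL _ (fmap_proper_filter f _)) [_ [[P LP <-] fP]] : (f @ \oo) (setwise_eval @` L).
  by exists 0%N => // n _; exists (Pn n) => //; case: (hPn n).
have PA_ge j : e <= P (A j).
  apply: (cluster_ge fP (u := fun h : {ptws msets -> R} => h (exist _ (A j) (mA j)))).
    exact: proj_continuous.
  exists j => // n /= jn; have [LPn PnA] := hPn n.
  apply: le_trans (_ : V (A n) <= _); first by rewrite leNgt; apply/negP/large.
  rewrite /setwise_eval /= -PnA; apply: fin_add_prob_le => //.
  - exact: is_prob_fin_add_prob (Lprob _ LPn).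
  - exact: mA.
  - exact: nonincreasing_setS jn.
have cge : closed [set x : R | e <= x] by exact: closed_ge.
have : e <= 0.
  apply: (closed_cvg _ cge _ _ (is_prob_continuous_at_empty (Lprob _ LP) mA dA IA)).
  exact: nearW.
by rewrite leNgt e0.
Qed.

Lemma core_is_prob P : core V P -> is_prob P.
Proof.
move=> [fP PV]; apply: continuous_at_empty_is_prob => //.
exact: continuous_at_empty_le upper_probability_continuous_at_empty.
Qed.

End UpperProbability.

Lemma mean_cst {R : numFieldType} (x : R) n : (0 < n)%N ->
  n%:R^-1 * \sum_(i < n) x = x.
Proof.
move=> n0; rewrite sumr_const card_ord -[x *+ n]mulr_natr mulrCA mulVf ?mulr1 //.
by rewrite pnatr_eq0 -lt0n.
Qed.

Lemma mean_bounds {R : numFieldType} n (a : nat -> R) :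
  (forall i, 0 <= a i <= 1) -> 0 <= n%:R^-1 * \sum_(i < n) a i <= 1.
Proof.
move=> a01; case: n => [|n]; first by rewrite big_ord0 mulr0 lexx ler01.
rewrite mulr_ge0 ?invr_ge0 ?sumr_ge0 //=; last by move=> i _; case/andP: (a01 i).
rewrite -[leRHS](mean_cst 1 (ltn0Sn n)); apply: ler_wpM2l; first by rewrite invr_ge0.
by apply: ler_sum => i _; case/andP: (a01 i).
Qed.

Section CesaroAverages.
Context {d : measure_display} {X : measurableType d} {R : realType}.
Variable T : X -> X.
Hypothesis mT : measurable_fun setT T.
Local Notation M := (@msets d X).
Local Notation FS := {ptws M -> R}.
Implicit Types (P W : set X -> R) (A B : set X).

Lemma preimage_iterS n A : iter n.+1 T @^-1` A = iter n T @^-1` (T @^-1` A).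
Proof. by []. Qed.

Lemma measurable_preimage_iter n A : measurable A -> measurable (iter n T @^-1` A).
Proof.
elim: n A => [//|n ih] A mA; rewrite preimage_iterS; apply: ih.
by rewrite -[_ @^-1` _]setTI; apply: mT.
Qed.

Lemma invariant_fun_iter W n A : invariant_fun T W -> measurable A ->
  W (iter n T @^-1` A) = W A.
Proof.
move=> iW; elim: n A => [//|n ih] A mA; rewrite preimage_iterS ih ?iW //.
by rewrite -[_ @^-1` _]setTI; apply: mT.
Qed.

Lemma invariant_set_iter E : T @^-1` E = E -> forall n, iter n T @^-1` E = E.
Proof. by move=> TE; elim => [//|n ih]; rewrite preimage_iterS TE. Qed.

Definition cesaro_mean P B n : FS :=
  fun A : M => n%:R^-1 * \sum_(i < n) P (B `&` iter i T @^-1` sval A).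

Lemma measurableI_preimage_iter B n (A : M) : measurable B ->
  measurable (B `&` iter n T @^-1` sval A).
Proof. by move=> mB; apply: measurableI => //; exact/measurable_preimage_iter/svalP. Qed.

Lemma cesaro_mean_unit_cube P B n : fin_add_prob P -> measurable B ->
  unit_cube (cesaro_mean P B n).
Proof.
move=> fP mB A; rewrite /cesaro_mean /= in_itv /=.
apply: (@mean_bounds R n (fun i => P (B `&` iter i T @^-1` sval A))) => i.
by rewrite fin_add_prob_ge0 ?fin_add_prob_le1 //; exact: measurableI_preimage_iter.
Qed.

Lemma cesaro_meanU P B n (a b c : M) : fin_add_prob P -> measurable B ->
  sval c = sval a `|` sval b -> sval a `&` sval b = set0 ->
  cesaro_mean P B n c = cesaro_mean P B n a + cesaro_mean P B n b.
Proof.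
move=> fP mB ec dab; rewrite /cesaro_mean -mulrDr -big_split /=; congr (_ * _).
apply: eq_bigr => i _; rewrite ec preimage_setU setIUr fin_add_prob_additive //;
  try exact: measurableI_preimage_iter.
by rewrite setIACA -preimage_setI dab preimage_set0 setI0.
Qed.

Lemma cesaro_meanT P B n : (0 < n)%N ->
  cesaro_mean P B n (exist _ setT measurableT) = P B.
Proof.
move=> n0; rewrite /cesaro_mean /=; under eq_bigr do rewrite preimage_setT setIT.
exact: mean_cst.
Qed.

Lemma cesaro_mean_preimage P B n (A TA : M) : fin_add_prob P -> measurable B ->
  sval TA = T @^-1` sval A ->
  `|cesaro_mean P B n TA - cesaro_mean P B n A| <= n%:R^-1.
Proof.
move=> fP mB eA; rewrite /cesaro_mean -mulrBr eA.
rewrite (eq_bigr (fun i : 'I_n => P (B `&` iter i.+1 T @^-1` sval A))) //.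
rewrite -sumrB -(big_mkord xpredT (fun i => P (B `&` iter i.+1 T @^-1` sval A)
  - P (B `&` iter i T @^-1` sval A))) telescope_sumr // normrM ger0_norm ?invr_ge0 //.
rewrite -[leRHS]mulr1 ler_wpM2l ?invr_ge0 //.
have ge0_le1 k : 0 <= P (B `&` iter k T @^-1` sval A) <= 1.
  by rewrite fin_add_prob_ge0 ?fin_add_prob_le1 //; exact: measurableI_preimage_iter.
have := ge0_le1 n; have := ge0_le1 0%N; rewrite ler_norml; move=> /andP[? ?] /andP[? ?].
by apply/andP; split; lra.
Qed.

Lemma cesaro_mean_le_invariant P B W n (A : M) : fin_add_prob P -> measurable B ->
  (forall A, measurable A -> P (B `&` A) <= W A) -> invariant_fun T W ->
  (0 < n)%N -> cesaro_mean P B n A <= W (sval A).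
Proof.
move=> fP mB PW iW n0; rewrite -(mean_cst (W (sval A)) n0) ler_wpM2l ?invr_ge0 //.
apply: ler_sum => i _; rewrite -(invariant_fun_iter i iW (svalP A)) PW //.
exact/measurable_preimage_iter/svalP.
Qed.

Lemma cesaro_mean_le_setT P B n (A : M) : fin_add_prob P -> measurable B ->
  cesaro_mean P B n A <= cesaro_mean P setT n A.
Proof.
move=> fP mB; rewrite ler_wpM2l ?invr_ge0 //; apply: ler_sum => i _.
by apply: fin_add_prob_le => //; try exact: measurableI_preimage_iter; apply: setSI.
Qed.

End CesaroAverages.

Lemma cvg_invn {R : archiRealFieldType} : (fun n => n%:R^-1 : R) @ \oo --> 0.
Proof. by rewrite -cvg_shiftS; exact: cvg_harmonic. Qed.

Section CesaroClusters.
Context {d : measure_display} {X : measurableType d} {R : realType}.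
Variable T : X -> X.
Hypothesis mT : measurable_fun setT T.
Local Notation M := (@msets d X).
Local Notation FS := {ptws M -> R}.
Variables (P : set X -> R) (B : set X) (g : FS).
Hypotheses (fP : fin_add_prob P) (mB : measurable B).
Hypothesis Pg : cluster (cesaro_mean T P B @ \oo) g.

Lemma cesaro_cluster_additive : fin_additive (of_msets g).
Proof.
move=> A1 A2 mA1 mA2 A12; have mA : measurable (A1 `|` A2) by exact: measurableU.
rewrite !of_msetsE; set a1 := exist _ A1 mA1; set a2 := exist _ A2 mA2.
set a := exist _ _ mA; apply/eqP; rewrite -subr_eq0; apply/eqP.
apply: (cluster_cvg Pg (u := fun h : FS => h a - (h a1 + h a2))).
  move=> h; have := cvgB (@eval_mset_continuous _ _ R a h)
    (cvgD (@eval_mset_continuous _ _ R a1 h) (@eval_mset_continuous _ _ R a2 h)); exact.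
apply: cvg_near_cst; apply: nearW => n /=.
by rewrite (@cesaro_meanU _ _ _ _ mT _ _ n a1 a2 a) ?subrr.
Qed.

Lemma cesaro_cluster_setT : of_msets g setT = P B.
Proof.
rewrite (of_msetsE _ measurableT).
apply: (cluster_cvg Pg (@eval_mset_continuous _ _ R _)); apply: cvg_near_cst.
by exists 1%N => // n; exact: cesaro_meanT.
Qed.

Lemma cesaro_cluster_invariant : invariant_fun T (of_msets g).
Proof.
move=> A mA; have mTA : measurable (T @^-1` A) by rewrite -[_ @^-1` _]setTI; apply: mT.
rewrite !of_msetsE; set a := exist _ A mA; set b := exist _ _ mTA.
apply/eqP; rewrite -subr_eq0; apply/eqP.
apply: (cluster_cvg Pg (u := fun h : FS => h b - h a)).
  move=> h; have := cvgB (@eval_mset_continuous _ _ R b h)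
    (@eval_mset_continuous _ _ R a h); exact.
apply: (squeeze_cvgr (f := fun n => - n%:R^-1) (h := fun n => n%:R^-1)).
- by apply: nearW => n /=; rewrite -ler_norml; exact: cesaro_mean_preimage.
- by rewrite -oppr0; exact: cvgN cvg_invn.
- exact: cvg_invn.
Qed.

Lemma cesaro_cluster_le W : (forall A, measurable A -> P (B `&` A) <= W A) ->
  invariant_fun T W -> forall A, measurable A -> of_msets g A <= W A.
Proof.
move=> PW iW A mA; rewrite of_msetsE.
apply: (cluster_le Pg (@eval_mset_continuous _ _ R _)).
by exists 1%N => // n /=; exact: cesaro_mean_le_invariant.
Qed.

Lemma cesaro_cluster_le_lim Q :
  (forall A : M, cesaro_mean T P setT n A @[n --> \oo] --> Q (sval A)) ->
  forall A, measurable A -> of_msets g A <= Q A.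
Proof.
move=> PQ A mA; rewrite of_msetsE.
apply: (cluster_le_cvg Pg (@eval_mset_continuous _ _ R _) _ (PQ (exist _ A mA))).
by apply: nearW => n; exact: cesaro_mean_le_setT.
Qed.

End CesaroClusters.

Lemma cesaro_cluster_core {d : measure_display} {X : measurableType d} {R : realType}
    (T : X -> X) (V P : set X -> R) (g : {ptws msets -> R}) :
  measurable_fun setT T -> invariant_fun T V -> core V P -> unit_cube g ->
  cluster (cesaro_mean T P setT @ \oo) g -> core V (of_msets g).
Proof.
move=> mT iV [fP PV] g01 Pg; split; first split.
- by rewrite (cesaro_cluster_setT Pg); case: fP.
- by move=> A mA; rewrite of_msetsE; case/andP: (g01 (exist _ A mA)).
- exact: (cesaro_cluster_additive mT fP measurableT Pg).
- by apply: (cesaro_cluster_le mT fP measurableT Pg) => // A mA; rewrite setTI PV.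
Qed.

Definition liminf_set {X : Type} (A : nat -> set X) : set X :=
  \bigcup_m \bigcap_k A (m + k)%N.

Lemma measurable_liminf_set {d : measure_display} {X : measurableType d}
  (A : nat -> set X) : (forall k, measurable (A k)) -> measurable (liminf_set A).
Proof.
move=> mA; apply: bigcup_measurable => m _.
by apply: bigcap_measurable => [|k _]; [exists 0%N|exact: mA].
Qed.

Lemma preimage_liminf_iter {X : Type} (T : X -> X) (D : set X) :
  T @^-1` liminf_set (fun k => iter k T @^-1` D) = liminf_set (fun k => iter k T @^-1` D).
Proof.
apply/seteqP; split => x [m _ h].
- by exists m.+1 => // k _ /=; rewrite -iterS iterSr; exact: h.
- by exists m => // k _; rewrite /= -iterSr -addnS; exact: h.
Qed.

Section DominatedSignedFunction.
Context {d : measure_display} {X : measurableType d} {R : realType}.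
Variables (Q rho : set X -> R).
Hypotheses (cQ : continuous_at_empty Q) (frho : fin_additive rho).
Hypothesis rhoQ : forall A, measurable A -> `|rho A| <= Q A.

Lemma dominated_continuous_at_empty : continuous_at_empty rho.
Proof.
move=> A mA dA IA; have QA0 := cQ mA dA IA.
apply: (squeeze_cvgr (f := fun n => - Q (A n)) (h := fun n => Q (A n))).
- by apply: nearW => n; rewrite -ler_norml; exact: rhoQ.
- by rewrite -oppr0; exact: cvgN.
- exact: QA0.
Qed.

Lemma dominated_cvg_nonincreasing (A : nat -> set X) :
  (forall n, measurable (A n)) -> (forall n, A n.+1 `<=` A n) ->
  rho (A n) @[n --> \oo] --> rho (\bigcap_n A n).
Proof.
move=> mA dA; set Acap := \bigcap_n A n.
have mI : measurable Acap by apply: bigcap_measurable => //; exists 0%N.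
have IA n : Acap `<=` A n by move=> x; apply.
have -> : (fun n => rho (A n)) = (fun n => rho Acap + rho (A n `\` Acap)).
  by apply: funext => n; rewrite (fin_additiveD frho (mA n) mI (IA n)); lra.
suff : rho (A n `\` Acap) @[n --> \oo] --> 0.
  by move=> /(cvgD (cvg_cst (rho Acap))); rewrite addr0.
apply: dominated_continuous_at_empty => [n|n x [Ax nIx]|]; first exact: measurableD.
  by split => //; exact: dA.
apply/seteqP; split => x //= h; have [_ nIx] := h 0%N I; apply: nIx => n _.
by have [] := h n I.
Qed.

Lemma dominated_cvg_nondecreasing (A : nat -> set X) :
  (forall n, measurable (A n)) -> (forall n, A n `<=` A n.+1) ->
  rho (A n) @[n --> \oo] --> rho (\bigcup_n A n).
Proof.
move=> mA iA; set U := \bigcup_n A n.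
have mU : measurable U by exact: bigcup_measurable.
have AU n : A n `<=` U by move=> x; exists n.
have -> : (fun n => rho (A n)) = (fun n => rho U - rho (U `\` A n)).
  by apply: funext => n; rewrite (fin_additiveD frho mU (mA n) (AU n)); lra.
suff : rho (U `\` A n) @[n --> \oo] --> 0.
  by move=> /(cvgB (cvg_cst (rho U))); rewrite subr0.
apply: dominated_continuous_at_empty => [n|n x [Ux nAx]|]; first exact: measurableD.
  by split => // Ax; apply: nAx; exact: iA.
apply/seteqP; split => x //= h; have [[n _ Anx] _] := h 0%N I.
by have [_] := h n I.
Qed.

Section BoundedAbove.
Variable s : R.
Hypothesis rho_le : forall A, measurable A -> rho A <= s.

Lemma liminf_set_ge (A : nat -> set X) : (forall k, measurable (A k)) ->
  (forall k, s - (2 ^+ k.+1)^-1 <= rho (A k)) -> s <= rho (liminf_set A).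
Proof.
move=> mA A_ge; pose w k : R := (2 ^+ k)^-1.
have hA k : s - w k.+1 <= rho (A k) := A_ge k.
have wS k : w k.+1 = w k / 2 by rewrite /w exprS invfM mulrC.
have w_ge0 k : 0 <= w k by rewrite invr_ge0 exprn_ge0.
pose D m j := \bigcap_(k in [set k | (k <= j)%N]) A (m + k)%N.
have mD m j : measurable (D m j).
  by apply: bigcap_measurable => [|k _]; [exists 0%N|exact: mA].
have DS m j : D m j.+1 = D m j `&` A (m + j.+1)%N.
  apply/seteqP; split => x /=.
  - by move=> h; split => [k /= kj|]; apply: h => //=; exact: leqW.
  - move=> [h1 h2] k /=; rewrite leq_eqVlt => /orP[/eqP -> //|].
    by rewrite ltnS => kj; apply: h1.
(* [rho (D `&` A) = rho D + rho A - rho (D `|` A) >= rho D + rho A - s] *)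
have D_ge m j : s - w m + w (m + j).+1 <= rho (D m j).
  elim: j => [|j ih].
    have -> : D m 0 = A m.
      apply/seteqP; split => x /=; first by move/(_ 0%N); rewrite addn0; apply.
      by move=> Ax [|k] //= _; rewrite addn0.
    by have := hA m; rewrite addn0 wS; lra.
  have := fin_additiveUI frho (mD m j) (mA (m + j.+1)%N); rewrite -DS.
  have := rho_le (measurableU _ _ (mD m j) (mA (m + j.+1)%N)).
  by have := hA (m + j.+1)%N; move: ih; rewrite addnS !wS; lra.
pose C m := \bigcap_k A (m + k)%N.
have C_ge m : s - w m <= rho (C m).
  have -> : C m = \bigcap_j D m j.
    apply/seteqP; split => x /=; first by move=> h j _ k _; exact: h.
    by move=> h k _; exact: (h k I k (leqnn k)).
  have cge : closed [set x : R | s - w m <= x] by exact: closed_ge.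
  apply: (closed_cvg _ cge _ _ (dominated_cvg_nonincreasing (mD m) _)).
    by apply: nearW => j /=; have := D_ge m j; have := w_ge0 (m + j).+1; lra.
  by move=> j; rewrite DS; apply: subIsetl.
have mC m : measurable (C m).
  by apply: bigcap_measurable => [|k _]; [exists 0%N|exact: mA].
have w0 : w m @[m --> \oo] --> 0.
  have -> : w = (fun m => 1 * 2^-1 ^+ m) by apply: funext => m; rewrite mul1r exprVn.
  by apply: cvg_geometric; rewrite ger0_norm ?invr_ge0 // invf_lt1 ?ltr0n // ltr1n.
have C_inc m : C m `<=` C m.+1 by move=> x h k _; rewrite addSn -addnS; exact: h.
have Csum : (fun m => rho (C m) + w m) @ \oo --> rho (\bigcup_n C n) + 0.
  exact: cvgD (dominated_cvg_nondecreasing mC C_inc) w0.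
rewrite addr0 in Csum.
have cge : closed [set x : R | s <= x] by exact: closed_ge.
suff : [set x : R | s <= x] (rho (\bigcup_n C n)) by [].
apply: (closed_cvg _ cge _ _ Csum).
by apply: nearW => m /=; have := C_ge m; lra.
Qed.

End BoundedAbove.

Lemma dominated_argmax : fin_add_prob Q ->
  exists2 D, measurable D & forall A, measurable A -> rho A <= rho D.
Proof.
move=> fQ; pose S := [set rho A | A in measurable].
have supS : has_sup S.
  split; first by exists (rho set0), set0.
  exists 1 => _ [A mA <-]; apply: le_trans (fin_add_prob_le1 fQ mA).
  exact: le_trans (ler_norm _) (rhoQ mA).
have rho_le A : measurable A -> rho A <= sup S.
  by move=> mA; apply: sup_upper_bound => //; exists A.
have /choice [A hA] k : exists A, measurable A /\ sup S - (2 ^+ k.+1)^-1 <= rho A.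
  have e0 : 0 < (2 ^+ k.+1)^-1 :> R by rewrite invr_gt0 exprn_gt0.
  by have [_ [A mA <-] /ltW] := sup_adherent e0 supS; exists A.
have mA k : measurable (A k) by case: (hA k).
exists (liminf_set A); first exact: measurable_liminf_set.
move=> B mB; apply: le_trans (rho_le B mB) _.
by apply: liminf_set_ge rho_le _ mA _ => k; case: (hA k).
Qed.

End DominatedSignedFunction.

Section ErgodicMinorant.
Context {d : measure_display} {X : measurableType d} {R : realType}.
Variables (T : X -> X) (Q : set X -> R).
Hypotheses (mT : measurable_fun setT T) (eQ : MeT T Q).

Lemma MeT_invariant_signed_eq0 (rho : set X -> R) : fin_additive rho ->
  (forall A, measurable A -> `|rho A| <= Q A) -> invariant_fun T rho ->
  rho setT = 0 -> forall A, measurable A -> rho A = 0.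
Proof.
move=> frho rhoQ irho rhoT; have [[pQ _] ergQ] := eQ.
have fQ := is_prob_fin_add_prob pQ; have cQ := is_prob_continuous_at_empty pQ.
have [D mD rho_le] := dominated_argmax cQ frho rhoQ fQ.
(* The invariant set [E] is again a maximiser, and ergodicity gives [rho E = 0]. *)
pose E := liminf_set (fun k => iter k T @^-1` D).
have mE : measurable E.
  by apply: measurable_liminf_set => k; exact: measurable_preimage_iter.
have DE : rho D <= rho E.
  apply: (liminf_set_ge cQ frho rhoQ rho_le) => k.
    exact: measurable_preimage_iter.
  rewrite invariant_fun_iter //; have : 0 <= (2 ^+ k.+1)^-1 :> R.
    by rewrite invr_ge0 exprn_ge0.
  lra.
have rhoE : rho E = 0.
  have mCE : measurable (~` E) by exact: measurableC.
  have [QE|QE] := ergQ E (conj mE (preimage_liminf_iter T D)).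
    by apply/normr0_eq0/eqP; rewrite eq_le normr_ge0 andbT -QE rhoQ.
  have QCE : Q (~` E) = 0 by rewrite fin_add_probC // QE subrr.
  have : rho (~` E) = 0 by apply/normr0_eq0/eqP; rewrite eq_le normr_ge0 andbT -QCE rhoQ.
  by have := frho _ _ mE mCE (setICr E); rewrite setUCr rhoT; lra.
move=> A mA; have mCA : measurable (~` A) by exact: measurableC.
have := frho _ _ mA mCA (setICr A); rewrite setUCr rhoT.
by have := rho_le A mA; have := rho_le _ mCA; lra.
Qed.

Lemma MeT_minorant_proportional (mu : set X -> R) : fin_additive mu ->
  (forall A, measurable A -> 0 <= mu A <= Q A) -> invariant_fun T mu ->
  forall A, measurable A -> mu A = mu setT * Q A.
Proof.
move=> fmu muQ imu; have [[pQ iQ] _] := eQ; have fQ := is_prob_fin_add_prob pQ.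
have Q1 : Q setT = 1 by case: fQ.
have /andP[c0 c1] : 0 <= mu setT <= 1 by rewrite -Q1; exact: muQ.
suff rho0 : forall A, measurable A -> mu A - mu setT * Q A = 0.
  by move=> A /rho0 /eqP; rewrite subr_eq0 => /eqP.
apply: MeT_invariant_signed_eq0.
- move=> A B mA mB AB; rewrite fmu // (fin_add_prob_additive fQ) //; lra.
- move=> A mA; have /andP[m0 mQ] := muQ A mA; have Q0 := fin_add_prob_ge0 fQ mA.
  have : mu setT * Q A <= Q A by rewrite ler_piMl.
  have : 0 <= mu setT * Q A by rewrite mulr_ge0.
  by rewrite ler_norml; move=> *; apply/andP; split; lra.
- by move=> A mA; rewrite imu // iQ.
- by rewrite Q1 mulr1 subrr.
Qed.

End ErgodicMinorant.

Lemma avg_limit_invariant {d : measure_display} {X : measurableType d} {R : realType}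
    (T : X -> X) (P Q : set X -> R) (B C : set X) :
  avg_limit T P Q -> measurable B -> measurable C -> T @^-1` C = C ->
  P (B `&` C) = P B * Q C.
Proof.
move=> PQ mB mC TC; apply/esym/(cvgr_unique (PQ B C mB mC)); apply: cvg_near_cst.
exists 1%N => // n /= n0; rewrite -[RHS](mean_cst (P (B `&` C)) n0).
by congr (_ * _); apply: eq_bigr => i _; rewrite invariant_set_iter.
Qed.

Section ErgodicUpperProbability.
Context {d : measure_display} {X : measurableType d} {R : realType}.
Variables (T : X -> X) (V : set X -> R).
Hypotheses (mT : measurable_fun setT T) (uV : upper_probability V)
  (iV : invariant_fun T V).
Local Notation M := (@msets d X).

Lemma core_invariant_MeT Q : ergodic_cap T V -> core V Q -> invariant_fun T Q ->
  MeT T Q.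
Proof.
by move=> eV cQ iQ; split; [split=> //; exact: core_is_prob cQ|exact: core_ergodic eV cQ].
Qed.

Lemma invariant_core_unique (Q1 Q2 : set X -> R) : ergodic_cap T V ->
  core V Q1 -> invariant_fun T Q1 -> core V Q2 -> invariant_fun T Q2 ->
  forall A, measurable A -> Q1 A = Q2 A.
Proof.
move=> eV cQ1 iQ1 cQ2 iQ2.
have [[Q1T Q1ge0 fQ1] Q1V] := cQ1; have [[Q2T Q2ge0 fQ2] Q2V] := cQ2.
pose Q A := (Q1 A + Q2 A) / 2.
have cQ : core V Q.
  split; first split.
  - by rewrite /Q Q1T Q2T; lra.
  - by move=> A mA; have := Q1ge0 A mA; have := Q2ge0 A mA; rewrite /Q; lra.
  - by move=> A B mA mB AB; rewrite /Q fQ1 // fQ2 //; lra.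
  - by move=> A mA; have := Q1V A mA; have := Q2V A mA; rewrite /Q; lra.
have eQ : MeT T Q.
  by apply: core_invariant_MeT eV cQ _ => A mA; rewrite /Q iQ1 // iQ2.
(* [Q1 / 2] is an invariant minorant of the ergodic invariant mean [Q]. *)
pose mu A := Q1 A / 2.
have fmu : fin_additive mu by move=> A B mA mB AB; rewrite /mu fQ1 //; lra.
have muQ A : measurable A -> 0 <= mu A <= Q A.
  by move=> mA; have := Q1ge0 A mA; have := Q2ge0 A mA; rewrite /mu /Q; lra.
have imu : invariant_fun T mu by move=> A mA; rewrite /mu iQ1.
move=> A mA; have := MeT_minorant_proportional mT eQ fmu muQ imu mA.
by rewrite /mu /Q Q1T; lra.
Qed.

Lemma invariant_core_exists : exists2 Q, core V Q & invariant_fun T Q.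
Proof.
have [P cP _] := upper_probability_attained uV measurableT.
have [g g01 Pg] :=
  unit_cube_cluster (fun n => cesaro_mean_unit_cube mT n cP.1 measurableT).
exists (of_msets g); first exact: cesaro_cluster_core mT iV cP g01 Pg.
exact: (cesaro_cluster_invariant mT cP.1 measurableT Pg).
Qed.

Section Convergence.
Variable Q : set X -> R.
Hypotheses (eV : ergodic_cap T V) (cQ : core V Q) (iQ : invariant_fun T Q).

Lemma cvg_cesaro_mean_setT P (A : M) : core V P ->
  cesaro_mean T P setT n A @[n --> \oo] --> Q (sval A).
Proof.
move=> cP; apply: cvg_eval_of_clusters => [n|g g01 Pg].
  exact: (cesaro_mean_unit_cube mT n cP.1 measurableT).
rewrite -of_msets_sval; apply: (invariant_core_unique eV _ _ cQ iQ (svalP A)).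
  exact: cesaro_cluster_core mT iV cP g01 Pg.
exact: (cesaro_cluster_invariant mT cP.1 measurableT Pg).
Qed.

Lemma cvg_cesaro_mean P B (A : M) : core V P -> measurable B ->
  cesaro_mean T P B n A @[n --> \oo] --> P B * Q (sval A).
Proof.
move=> cP mB; apply: cvg_eval_of_clusters => [n|g g01 Pg].
  exact: (cesaro_mean_unit_cube mT n cP.1 mB).
have eQ := core_invariant_MeT eV cQ iQ.
rewrite -of_msets_sval -(cesaro_cluster_setT Pg).
apply: (MeT_minorant_proportional mT eQ _ _ _ (svalP A)).
- exact: (cesaro_cluster_additive mT cP.1 mB Pg).
- move=> C mC; rewrite (cesaro_cluster_le_lim mT cP.1 mB Pg _ mC) ?andbT.
    by rewrite of_msetsE; case/andP: (g01 (exist _ C mC)).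
  by move=> a; apply: cvg_cesaro_mean_setT.
- exact: (cesaro_cluster_invariant mT cP.1 mB Pg).
Qed.

End Convergence.

Lemma avg_limit_ergodic Q : core V Q -> (forall P, core V P -> avg_limit T P Q) ->
  ergodic_cap T V.
Proof.
move=> cQ lim B [mB TB]; have mCB : measurable (~` B) by exact: measurableC.
have core0 P : core V P -> P set0 = 0 by move=> [/fin_add_prob_additive/fin_additive0].
have PB P : core V P -> P B = P B * Q B.
  by move=> cP; rewrite -(avg_limit_invariant (lim P cP) mB mB TB) setIid.
have PCB P : core V P -> P (~` B) * Q B = 0.
  by move=> cP; rewrite -(avg_limit_invariant (lim P cP) mCB mB TB) setICl core0.
have : Q B * (Q B - 1) = 0 by rewrite mulrBr mulr1 -PB // subrr.
move/eqP; rewrite mulf_eq0 subr_eq0 => /orP[/eqP QB0|/eqP QB1].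
  have [P cP <-] := upper_probability_attained uV mB.
  by rewrite PB // QB0 mulr0; split; left.
have [P cP <-] := upper_probability_attained uV mCB.
have [P' cP' <-] := upper_probability_attained uV mB.
have := PCB P' cP'; rewrite QB1 mulr1 (fin_add_probC cP'.1 mB) => P'B.
by rewrite -(mulr1 (P (~` B))) -QB1 PCB //; split; right; lra.
Qed.

End ErgodicUpperProbability.

Theorem theorem4p4 (d : measure_display) (X : measurableType d) (R : realType)
  (T : X -> X) (V : set X -> R) :
  measurable_fun setT T ->
  upper_probability V ->
  invariant_fun T V ->
  [<-> ergodic_cap T V;
       exists2 Q, (core V `&` MeT T) Q & forall P, core V P -> avg_limit T P Q;
       exists2 Q, (core V `&` MT T) Q & forall P, core V P -> avg_limit T P Q].
Proof.
move=> mT uV iV; tfae.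
- move=> eV; have [Q cQ iQ] := invariant_core_exists mT uV iV.
  exists Q; first by split=> //; exact: (core_invariant_MeT uV eV cQ iQ).
  move=> P cP B C mB mC.
  exact (cvg_cesaro_mean mT uV iV eV cQ iQ (A := exist _ C mC) cP mB).
- by move=> [Q [cQ [MQ _]] lim]; exists Q.
- by move=> [Q [cQ _] lim]; exact: (avg_limit_ergodic uV cQ lim).
Qed.
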